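(* Let $\varphi$ be a primitive $k$-uniform morphism on $\{0,1\}$ with $\varphi(0)$ beginning with $0$, and let $a=|\varphi(0)|_0$, $b=|\varphi(0)|_1$, $c=|\varphi(1)|_0$, $d=|\varphi(1)|_1$ (so $a+b=c+d=k$). Let $w=\lim_{n\to\infty}\varphi^n(0)$ be the infinite fixed point of $\varphi$ starting with $0$. For a finite or infinite binary word $u$, let $g_u$ be its graphic with respect to the vectors $\mathbf v_0=(1,-b)$, $\mathbf v_1=(1,c)$. Then: 1. If $g_{\varphi(0)}(x)=0$ for some real $x$ with $0<x\le k$, then $w$ is weak abelian periodic. 2. If $g_{\varphi(0)}(k)\ge -b$, then $w$ is weak abelian periodic. 3. Suppose that $g_{\varphi(0)}(x)\neq 0$ for all real $x\in(0,k]$ and $g_{\varphi(0)}(k)<-b$. Put $\Delta=g_{\varphi(0)}(k)$, $A=\max\{g_{\varphi(0)}(i): 1\le i\le k,\ \varphi(0)_i=1\}$ and $t=\max\{g_{\varphi(1)}(i): 1\le i\le k,\ \varphi(1)_i=1\}$, where $u_i$ denotes the $i$-th letter of $u$. Then $w$ is weak abelian periodic if and only if $\Delta\cdot\frac{A-c}{-b}+t\ge A$.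
   Context: A morphism $\varphi$ on $\{0,1\}^*$ is $k$-uniform if $|\varphi(0)|=|\varphi(1)|=k$, and primitive if for some $m$ both $\varphi^m(0)$ and $\varphi^m(1)$ contain both letters. $|u|_a$ is the number of occurrences of letter $a$ in $u$. The graphic $g_u$ of a binary word $u=u_1u_2\cdots$ with respect to vectors $\mathbf v_0=(1,-b)$, $\mathbf v_1=(1,c)$ is the piecewise linear function on $[0,|u|]$ (or $[0,\infty)$) with $g_u(0)=0$, $g_u(n)=c\,|u_1\cdots u_n|_1-b\,|u_1\cdots u_n|_0$ for integers $n$, and linear between consecutive integers. For a finite word $v$, $\rho_a(v)=|v|_a/|v|$ for nonempty $v$. An infinite binary word $w$ is weak abelian periodic if $w=v_0v_1v_2\cdots$ with $v_0$ finite and $v_1,v_2,\dots$ nonempty finite words such that $\rho_a(v_i)=\rho_a(v_j)$ for $a\in\{0,1\}$ and all $i,j\ge1$. *)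

(* Letters: false = 0, true = 1. *)
From HB Require Import structures.
From mathcomp Require Import all_boot all_order all_algebra.
From mathcomp Require Import reals.
Set Implicit Arguments. Unset Strict Implicit. Unset Printing Implicit Defensive.
Import Order.TTheory GRing.Theory Num.Theory.
Local Open Scope ring_scope.

Definition morph (u0 u1 : seq bool) (u : seq bool) : seq bool :=
  flatten [seq (if x then u1 else u0) | x <- u].

Definition morphN (u0 u1 : seq bool) (n : nat) (u : seq bool) : seq bool :=
  iter n (morph u0 u1) u.

Definition uniform (k : nat) (u0 u1 : seq bool) : Prop :=
  size u0 = k /\ size u1 = k.

Definition primitive (u0 u1 : seq bool) : Prop :=
  exists m : nat, forall x y : bool, y \in morphN u0 u1 m [:: x].

(* w : nat -> bool is the limit of phi^n(0): every phi^n(0) is a prefix of w *)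
Definition is_fixed_point_from0 (u0 u1 : seq bool) (w : nat -> bool) : Prop :=
  forall n i, (i < size (morphN u0 u1 n [:: false]))%N ->
    w i = nth false (morphN u0 u1 n [:: false]) i.

Definition rho (a : bool) (v : seq bool) : rat :=
  (count_mem a v)%:R / (size v)%:R.

Definition factor (w : nat -> bool) (m n : nat) : seq bool :=
  [seq w j | j <- iota m (n - m)].

(* w = v0 v1 v2 ... with v0 = w[0, p 0), v_(i+1) = w[p i, p (i+1)) nonempty *)
Definition weak_abelian_periodic (w : nat -> bool) : Prop :=
  exists p : nat -> nat, (forall i, (p i < p i.+1)%N) /\
    forall (a : bool) (i j : nat),
      rho a (factor w (p i) (p i.+1)) = rho a (factor w (p j) (p j.+1)).

(* Graphic of a finite word u w.r.t. v0 = (1,-b), v1 = (1,c): the piecewise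
   linear function with g(0)=0, slope -b on [i,i+1] if u_(i+1)=0 and slope c
   if u_(i+1)=1 (on [0, |u|]). *)
Definition graphic (R : realType) (b c : nat) (u : seq bool) (x : R) : R :=
  \sum_(i < size u)
     (if nth false u i then (c%:R : R) else - (b%:R : R))
       * Num.min 1 (Num.max 0 (x - (i%:R : R))).

(* maximum of a nonempty list (0 for the empty list; not used in that case) *)
Definition smax (R : realType) (s : seq R) : R :=
  match s with [::] => 0 | x :: s' => foldr Num.max x s' end.

Definition max_after_one (R : realType) (b c : nat) (u : seq bool) : R :=
  smax [seq graphic b c u (i%:R : R) | i <- iota 1 (size u) & nth false u i.-1].

(* The graphic at integer points is the height H(n) = c |w[0,n)|_1 - b |w[0,n)|_0.
   As phi is k-uniform, H(k n + j) = lambda H(n) + g_{phi(w_n)}(j) with lambda = a - c;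
   in particular H(k^m) = -lambda^m b.
   If some level is crossed upwards infinitely often then, upward steps having size c,
   some level is hit infinitely often, and the visits of that level cut w into blocks
   of equal densities.  This happens when lambda <= 1, when lambda >= 2 and g_{phi(0)}
   takes a nonnegative value, and under the peak condition, which makes every peak
   ending with a 1 regenerate a higher one under phi.
   Conversely, if the peak condition fails then H <= 0, H(n) <= -1 - log_k n, and
   -H(n) = O((k-1)^m) on [0, k^(m+1)) is sublinear; but along a weak abelian
   decomposition H is affine with the common slope of the blocks. *)
From HB Require Import structures.
From mathcomp Require Import all_boot all_order all_algebra.
From mathcomp Require Import reals.
From mathcomp Require Import zify ring lra.
From Stdlib Require Import Classical.
Set Implicit Arguments. Unset Strict Implicit. Unset Printing Implicit Defensive.
Import Order.TTheory GRing.Theory Num.Theory.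
Local Open Scope ring_scope.

Lemma count_false_true (s : seq bool) :
  (count_mem false s + count_mem true s)%N = size s.
Proof. rewrite -(count_predC (pred1 false)); congr addn; by apply: eq_count => -[]. Qed.

Lemma exprn_ge_succ (x : int) m : 2 <= x -> m%:Z + 1 <= x ^+ m.
Proof.
move=> ge_x2; elim: m => [|m IH]; first by rewrite expr0.
by rewrite exprS; nia.
Qed.

Lemma bernoulli_expr (x : int) m : 0 <= x -> (x + m%:Z) * x ^+ m <= x * (x + 1) ^+ m.
Proof.
move=> ge_x0; elim: m => [|m IH]; first by rewrite !expr0; lia.
have := exprn_ge0 m ge_x0; rewrite !exprS; nia.
Qed.

Lemma size_factor (w : nat -> bool) m n : size (factor w m n) = (n - m)%N.
Proof. by rewrite size_map size_iota. Qed.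

Definition infinitely_often (P : nat -> Prop) : Prop :=
  forall N, exists2 n, (N <= n)%N & P n.

Section Height.
Variables (b c : nat).

Definition step (x : bool) : int := if x then c%:Z else - b%:Z.

(* The graphic g_w at the integer point n; a finite word u is read as [nth false u]. *)
Definition height (w : nat -> bool) (n : nat) : int := \sum_(0 <= i < n) step (w i).

Lemma height0 w : height w 0%N = 0.
Proof. by rewrite /height big_geq. Qed.

Lemma heightS w n : height w n.+1 = height w n + step (w n).
Proof. by rewrite /height big_nat_recr. Qed.

Lemma heightD w m n : height w (m + n) = height w m + height (fun i => w (m + i)) n.
Proof.
elim: n => [|n IH]; first by rewrite addn0 height0 addr0.
by rewrite addnS !heightS IH addrA.
Qed.

Lemma step_le x : step x <= c%:Z.
Proof. by case: x => //=; lia. Qed.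

Lemma height_ge w n : - (b%:Z * n%:Z) <= height w n.
Proof.
elim: n => [|n IH]; first by rewrite height0; lia.
by rewrite heightS; case: (w n) => /=; lia.
Qed.

Lemma sum_step s : \sum_(x <- s) step x =
  c%:Z * (count_mem true s)%:Z - b%:Z * (count_mem false s)%:Z.
Proof.
elim: s => [|x s IH]; first by rewrite big_nil /=; ring.
by rewrite big_cons IH; case: x => /=; lia.
Qed.

Lemma height_size u : height (nth false u) (size u) =
  c%:Z * (count_mem true u)%:Z - b%:Z * (count_mem false u)%:Z.
Proof. by rewrite /height -(big_nth false xpredT step) sum_step. Qed.

Lemma height_le_peak u (t : int) :
  (forall j, (1 <= j <= size u)%N -> nth false u j.-1 -> height (nth false u) j <= t) ->
  forall j, (j <= size u)%N -> height (nth false u) j <= 0 \/ height (nth false u) j <= t.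
Proof.
move=> Hpeak; elim=> [|j IH] le_j; first by left; rewrite height0.
case E: (nth false u j); first by right; apply: Hpeak; rewrite /= ?E.
by rewrite heightS E /=; have := IH (ltnW le_j); lia.
Qed.

Lemma height_factor w m n : (m <= n)%N -> height w n - height w m =
  c%:Z * (count_mem true (factor w m n))%:Z - b%:Z * (count_mem false (factor w m n))%:Z.
Proof.
move=> /subnKC <-; rewrite heightD addrC addKr -sum_step /factor addKn big_map.
by rewrite -[m]addn0 iotaDl big_map addn0 /height /index_iota subn0.
Qed.

Lemma band_after_crossing w h n1 n2 : (n1 <= n2)%N ->
  height w n1 < h -> h <= height w n2 ->
  exists2 n, (n1 <= n)%N & h <= height w n < h + c%:Z.
Proof.
move=> le_n12; rewrite -(subnKC le_n12); move: (n2 - n1)%N => d {n2 le_n12}.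
elim: d n1 => [|d IH] n1; first by rewrite addn0; lia.
move=> lt_n1 ge_n2; case: (leP h (height w n1.+1)) => Hn1.
  exists n1.+1 => //; have := step_le (w n1); rewrite heightS in Hn1 *; lia.
have ge_n2' : h <= height w (n1.+1 + d) by rewrite addSnnS.
have [n le_n Hn] := IH n1.+1 Hn1 ge_n2'.
by exists n => //; exact: ltnW.
Qed.

Lemma level_of_band w (lo : int) (m : nat) :
  infinitely_often (fun n => lo <= height w n < lo + m%:Z) ->
  exists h, infinitely_often (fun n => height w n = h).
Proof.
elim: m => [|m IH] Hband.
  by have [n _] := Hband 0%N; lia.
have [Htop|/not_all_ex_not [N0 HN0]] :=
  classic (infinitely_often (fun n => height w n = lo + m%:Z)).
  by exists (lo + m%:Z).
apply: IH => N; have [n] := Hband (maxn N N0); rewrite geq_max => /andP[le_N le_N0] Hn.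
exists n => //; have : height w n <> lo + m%:Z by move=> E; apply: HN0; exists n.
by move: Hn; lia.
Qed.

(* Consecutive visits of level h cut w into blocks with no height gain, i.e. with
   densities c / (b + c) of 0 and b / (b + c) of 1. *)
Lemma wap_of_level w (h : int) : (0 < b + c)%N ->
  infinitely_often (fun n => height w n = h) -> weak_abelian_periodic w.
Proof.
move=> bc_gt0 Hh.
have Hh' N : exists n, (N <= n)%N && (height w n == h).
  by have [n le_n /eqP Hn] := Hh N; exists n; rewrite le_n Hn.
pose next N := xchoose (Hh' N).
have next_spec N : (N <= next N)%N /\ height w (next N) = h.
  by have /andP[-> /eqP ->] := xchooseP (Hh' N).
pose p i := iter i (fun m => next m.+1) (next 0).
have p_level i : height w (p i) = h by case: i => [|i]; apply: (next_spec _).2.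
have p_incr i : (p i < p i.+1)%N by apply: (next_spec _).1.
exists p; split => // x i j.
suff rhoE i' : rho x (factor w (p i') (p i'.+1)) = (if x then b else c)%:R / (b + c)%:R.
  by rewrite !rhoE.
have := height_factor w (ltnW (p_incr i')); rewrite !p_level subrr => E.
have := count_false_true (factor w (p i') (p i'.+1)); rewrite size_factor => Hsize.
apply/eqP; rewrite /rho size_factor eqr_div ?pnatr_eq0 -?lt0n ?subn_gt0 //.
by rewrite -!natrM eqr_nat; apply/eqP; case: x; nia.
Qed.

Lemma wap_of_crossing w (h : int) : (0 < b + c)%N ->
  (forall N, exists n1 n2, [/\ (N <= n1 <= n2)%N, height w n1 < h & h <= height w n2]) ->
  weak_abelian_periodic w.
Proof.
move=> bc_gt0 Hcross.
have [h' Hh'] : exists h', infinitely_often (fun n => height w n = h').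
  apply: (@level_of_band w h c) => N.
  have [n1 [n2 [/andP[le_N le_n12] lt_n1 ge_n2]]] := Hcross N.
  have [n le_n Hn] := band_after_crossing le_n12 lt_n1 ge_n2.
  by exists n => //; exact: leq_trans le_n.
exact: wap_of_level Hh'.
Qed.

Lemma wap_height_linear w : weak_abelian_periodic w ->
  exists (p : nat -> nat) (L : nat) (S : int), [/\ forall i, (p i < p i.+1)%N, (0 < L)%N &
    forall i, L%:Z * (height w (p i) - height w (p 0%N)) = S * ((p i)%:Z - (p 0%N)%:Z)].
Proof.
move=> [p [p_incr Hrho]].
pose len i := (p i.+1 - p i)%N.
pose zeros i := count_mem false (factor w (p i) (p i.+1)).
have len_gt0 i : (0 < len i)%N by rewrite subn_gt0.
have zerosE i : (zeros i * len 0%N = zeros 0%N * len i)%N.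
  have /eqP := Hrho false i 0%N; rewrite /rho !size_factor eqr_div; last 2 first.
  - by rewrite pnatr_eq0 -lt0n; exact: len_gt0.
  - by rewrite pnatr_eq0 -lt0n; exact: len_gt0.
  by rewrite -!natrM eqr_nat => /eqP.
pose S := c%:Z * (len 0%N)%:Z - (b%:Z + c%:Z) * (zeros 0%N)%:Z.
exists p, (len 0%N), S; split => //.
elim=> [|i IH]; first by rewrite !subrr !mulr0.
have Hones : (count_mem true (factor w (p i) (p i.+1)))%:Z = (len i)%:Z - (zeros i)%:Z.
  by have := count_false_true (factor w (p i) (p i.+1)); rewrite size_factor /len /zeros /=; lia.
have Hlen : (len i)%:Z = (p i.+1)%:Z - (p i)%:Z by rewrite /len /=; have := p_incr i; lia.
have Hblock : (len 0%N)%:Z * (height w (p i.+1) - height w (p i)) = S * (len i)%:Z.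
  rewrite (height_factor w (ltnW (p_incr i))) Hones -/(zeros i).
  have -> : (len 0%N)%:Z * (c%:Z * ((len i)%:Z - (zeros i)%:Z) - b%:Z * (zeros i)%:Z) =
      c%:Z * (len 0%N)%:Z * (len i)%:Z - (b%:Z + c%:Z) * ((zeros i * len 0%N)%N)%:Z by rewrite PoszM; ring.
  by rewrite zerosE PoszM /S; ring.
rewrite -[height w (p i.+1)](subrK (height w (p i))) -addrA mulrDr IH Hblock Hlen; ring.
Qed.

End Height.

Section Graphic.
Variables (R : realType) (b c : nat).
Local Notation hgt u := (height b c (nth false u)).

Lemma height_real u n : ((hgt u n)%:~R : R) =
  \sum_(0 <= i < n) (if nth false u i then (c%:R : R) else - (b%:R : R)).
Proof.
elim: n => [|n IH]; first by rewrite height0 big_geq.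
by rewrite heightS intrD IH big_nat_recr //=; case: (nth false u n); rewrite /= ?intrN.
Qed.

Lemma graphic_segment u i (x : R) : (i < size u)%N -> i%:R <= x <= i%:R + 1 ->
  graphic b c u x = (hgt u i)%:~R + (step b c (nth false u i))%:~R * (x - i%:R).
Proof.
move=> lt_i /andP[ge_x le_x].
rewrite /graphic -(big_mkord xpredT (fun j : nat => (if nth false u j then (c%:R : R)
  else - (b%:R : R)) * Num.min 1 (Num.max 0 (x - j%:R)))).
rewrite (@big_cat_nat _ _ _ i 0 (size u)) ?leq0n ?(ltnW lt_i) //=.
rewrite (@big_cat_nat _ _ _ i.+1 i (size u)) ?leqnSn //= big_nat1.
rewrite [X in _ + (_ + X)]big1_seq ?addr0; last first.
  move=> j /andP[_]; rewrite mem_index_iota => /andP[lt_ij _].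
  have : i%:R + 1 <= (j%:R : R) by rewrite natr1 ler_nat.
  by move=> Hj; rewrite max_l ?min_r ?mulr0 //; lra.
rewrite height_real; congr (_ + _).
  apply: eq_big_nat => j /andP[_ lt_ji].
  have : (j%:R : R) + 1 <= i%:R by rewrite natr1 ler_nat.
  by move=> Hj; rewrite max_r ?min_l ?mulr1 //; lra.
rewrite max_r ?min_r; try lra.
by case: (nth false u i); rewrite /= ?intrN.
Qed.

Lemma graphic_nat u n : (n <= size u)%N -> graphic b c u (n%:R : R) = (hgt u n)%:~R.
Proof.
case: n => [|n] le_n.
  rewrite /graphic height0 big1 // => i _.
  by rewrite sub0r max_l ?min_r ?mulr0 // oppr_le0 ler0n.
rewrite (@graphic_segment u n) //; last by rewrite -natr1; apply/andP; split; lra.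
by rewrite heightS intrD -natr1 addrAC subrr add0r mulr1.
Qed.

Lemma graphic_lt0 u : (forall j, (1 <= j <= size u)%N -> hgt u j < 0) ->
  forall x : R, 0 < x -> x <= (size u)%:R -> graphic b c u x < 0.
Proof.
move=> Hneg; suff Hi i : (i <= size u)%N -> forall x : R, 0 < x -> x <= i%:R ->
  graphic b c u x < 0 by exact: Hi.
elim: i => [|i IH] le_i x gt0_x le_x; first by move: le_x; rewrite mulr0n; lra.
case: (leP x i%:R) => [le_xi|gt_xi]; first by apply: IH => //; exact: ltnW.
rewrite (@graphic_segment u i) //; last by rewrite -natr1 in le_x; apply/andP; split; lra.
have hi_le0 : ((hgt u i)%:~R : R) <= 0.
  rewrite lerz0; case: i {IH gt_xi le_x} le_i => [|i] le_i; first by rewrite height0.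
  by apply/ltW/Hneg; rewrite (ltnW le_i).
have : ((hgt u i.+1)%:~R : R) < 0 by rewrite ltrz0 Hneg.
rewrite heightS intrD; set h := (hgt u i)%:~R in hi_le0 *; set s := _%:~R.
move=> hs_lt0; set t := x - i%:R.
have t_gt0 : 0 < t by rewrite /t; lra.
have t_le1 : t <= 1 by rewrite /t; rewrite -natr1 in le_x; lra.
have -> : h + s * t = (1 - t) * h + t * (h + s) by ring.
have : (1 - t) * h <= 0 by rewrite mulr_ge0_le0 // subr_ge0.
have : t * (h + s) < 0 by rewrite pmulr_rlt0.
lra.
Qed.

Lemma graphic_root_height_ge0 u :
  (exists x : R, [/\ 0 < x, x <= (size u)%:R & graphic b c u x = 0]) ->
  exists2 j, (1 <= j <= size u)%N & 0 <= hgt u j.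
Proof.
move=> [x [gt0_x le_x gx0]]; apply: NNPP => Hnot.
have Hneg j : (1 <= j <= size u)%N -> hgt u j < 0.
  by move=> Hj; case: (ltP (hgt u j) 0) => // Hge; case: Hnot; exists j.
by have := graphic_lt0 Hneg gt0_x le_x; rewrite gx0 ltxx.
Qed.

(* Between consecutive integers the graphic is affine, so a sign change of the
   heights would produce a root. *)
Lemma height_lt0_of_graphic_neq0 u : (0 < b)%N -> nth false u 0%N = false ->
  (forall x : R, 0 < x -> x <= (size u)%:R -> graphic b c u x != 0) ->
  forall j, (1 <= j <= size u)%N -> hgt u j < 0.
Proof.
move=> b_gt0 u_head Hneq0; elim=> [|j IH] // /andP[_ le_j].
case: j IH le_j => [|j] IH le_j.
  by rewrite heightS height0 u_head /=; lia.
have hj_lt0 : hgt u j.+1 < 0 by apply: IH; rewrite (ltnW le_j).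
case: (ltP (hgt u j.+2) 0) => // hj2_ge0; exfalso.
rewrite heightS in hj2_ge0.
set h := hgt u j.+1 in hj_lt0 hj2_ge0; set s := step b c _ in hj2_ge0.
pose x : R := j.+1%:R - h%:~R / s%:~R.
have s_gt0 : (0 : R) < s%:~R by rewrite ltr0z; lia.
have h_lt0 : (h%:~R : R) < 0 by rewrite ltrz0.
have hs_ge0 : (0 : R) <= h%:~R + s%:~R by rewrite -intrD ler0z.
have theta_gt0 : 0 < - h%:~R / s%:~R :> R by apply: divr_gt0; lra.
have theta_le1 : - h%:~R / s%:~R <= 1 :> R by rewrite ler_pdivrMr //; lra.
have Hseg : j.+1%:R <= x <= j.+1%:R + 1 by rewrite /x -mulNr; apply/andP; lra.
have x_gt0 : 0 < x by rewrite /x -mulNr; have : (0 : R) <= j.+1%:R by []; lra.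
have x_le : x <= (size u)%:R.
  have : (j.+2%:R : R) <= (size u)%:R by rewrite ler_nat.
  by rewrite /x -mulNr -natr1; lra.
have := Hneq0 x x_gt0 x_le; rewrite (graphic_segment _ Hseg) //.
suff -> : h%:~R + s%:~R * (x - j.+1%:R) = 0 :> R by rewrite eqxx.
by rewrite /x addrAC subrr add0r mulrN mulrC divfK ?subrr // gt_eqF.
Qed.

Lemma foldr_max_mem (x : R) s : foldr Num.max x s \in x :: s.
Proof.
elim: s => [|y s IH] /=; first by rewrite mem_head.
case: (leP y (foldr Num.max x s)) => _; last by rewrite !inE eqxx orbT.
by move: IH; rewrite !inE => /orP[] ->; rewrite ?orbT.
Qed.

Lemma foldr_max_ub (x : R) s y : y \in x :: s -> y <= foldr Num.max x s.
Proof.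
elim: s => [|z s IH] /=; first by rewrite inE => /eqP ->.
rewrite le_max; case: (eqVneq y z) => [->|ne_yz] Hy; first by rewrite lexx.
by rewrite IH ?orbT //; move: Hy; rewrite !inE (negbTE ne_yz).
Qed.

Lemma max_after_one_ub u j : (1 <= j <= size u)%N -> nth false u j.-1 ->
  (hgt u j)%:~R <= max_after_one R b c u.
Proof.
move=> /andP[ge_j le_j] uj; rewrite /max_after_one -graphic_nat //.
set s := [seq _ | _ <- _]; have : graphic b c u j%:R \in s.
  by apply: map_f; rewrite mem_filter uj mem_iota ge_j add1n ltnS.
by case: s => [|x s] //; exact: foldr_max_ub.
Qed.

Lemma max_after_one_attained u : true \in u ->
  exists2 j, (1 <= j <= size u)%N && nth false u j.-1 & max_after_one R b c u = (hgt u j)%:~R.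
Proof.
move=> u_has1; rewrite /max_after_one.
set F := [seq i <- _ | _].
have : (index true u).+1 \in F by rewrite mem_filter /= nth_index // mem_iota add1n !ltnS index_mem.
case E: F => [//|i0 F'] _.
have : smax [seq graphic b c u (i%:R : R) | i <- i0 :: F'] \in [seq graphic b c u (i%:R : R) | i <- i0 :: F'].
  exact: foldr_max_mem.
case/mapP => j; rewrite -E mem_filter mem_iota add1n ltnS => /andP[uj Hj] ->.
by exists j; [rewrite uj andbT | rewrite graphic_nat //; case/andP: Hj].
Qed.

End Graphic.

Lemma morphNS u0 u1 n s : morphN u0 u1 n.+1 s = morph u0 u1 (morphN u0 u1 n s).
Proof. by []. Qed.

Section FixedPoint.
Variables (k : nat) (u0 u1 : seq bool) (w : nat -> bool).
Hypothesis uniform_phi : uniform k u0 u1.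
Hypothesis primitive_phi : primitive u0 u1.
Hypothesis u0_head : nth true u0 0 = false.
Hypothesis w_fixed : is_fixed_point_from0 u0 u1 w.

Local Notation phi x := (if x then u1 else u0).
Let b := count_mem true u0.
Let c := count_mem false u1.
Local Notation H := (height b c).
Local Notation hgt u := (height b c (nth false u)).

(* The eigenvalue a - c of the incidence matrix of phi other than k. *)
Definition lambda : int := (count_mem false u0)%:Z - c%:Z.

Lemma size_phi x : size (phi x) = k.
Proof. by case: uniform_phi => ? ?; case: x. Qed.

Lemma size_morph s : size (morph u0 u1 s) = (k * size s)%N.
Proof.
elim: s => [|x s IH]; first by rewrite muln0.
by rewrite /morph /= size_cat -/(morph u0 u1 s) IH size_phi mulnS.
Qed.

Lemma size_morphN n : size (morphN u0 u1 n [:: false]) = (k ^ n)%N.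
Proof. by elim: n => [|n IH] //; rewrite morphNS size_morph IH expnS. Qed.

Lemma nth_morph s n j : (n < size s)%N -> (j < k)%N ->
  nth false (morph u0 u1 s) (k * n + j) = nth false (phi (nth false s n)) j.
Proof.
elim: s n => [|x s IH] [|n] //= lt_n lt_j; rewrite /morph /= nth_cat size_phi.
  by rewrite muln0 add0n lt_j.
rewrite mulnS -addnA ltnNge leq_addr /= addKn; exact: IH.
Qed.

Lemma morphN_const x : all (pred1 x) (phi x) -> forall m, all (pred1 x) (morphN u0 u1 m [:: x]).
Proof.
move=> Hx; elim=> [|m IH]; first by rewrite /= eqxx.
rewrite morphNS; elim: (morphN u0 u1 m [:: x]) IH => [|y s IHs] //= /andP[/eqP -> Hs].
by rewrite /morph /= all_cat -/(morph u0 u1 s) Hx IHs.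
Qed.

Lemma count_phi_other_gt0 x : (0 < count_mem (~~ x) (phi x))%N.
Proof.
case: primitive_phi => m Hm; rewrite lt0n; apply/negP => /eqP/count_memPn Hx.
have Hconst : all (pred1 x) (phi x).
  by apply/allP => y Hy; case: x y Hy Hx {Hm} => [] [] //= ->.
by have /allP/(_ _ (Hm x (~~ x))) := morphN_const Hconst m; case: x {Hx Hconst}.
Qed.

Lemma b_gt0 : (0 < b)%N. Proof. exact: (count_phi_other_gt0 false). Qed.

Lemma u0_head_false : nth false u0 0%N = false.
Proof.
by case: u0 u0_head b_gt0 => [|x s] //=; rewrite /b; case: s.
Qed.

Lemma k_ge2 : (2 <= k)%N.
Proof.
rewrite -(size_phi false); have := b_gt0; have := u0_head; rewrite /b.
by case: u0 => [|x [|y s]] //= ->.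
Qed.

Lemma fixed_point_nth n j : (j < k)%N -> w (k * n + j) = nth false (phi (w n)) j.
Proof.
move=> lt_j; have lt_n : (n < k ^ n)%N by apply: ltn_expl; exact: k_ge2.
have lt_kn : (k * n + j < size (morphN u0 u1 n.+1 [:: false]))%N.
  rewrite size_morphN expnS (@leq_trans (k * n.+1)) //; first by rewrite mulnS addnC ltn_add2r.
  by rewrite leq_mul2l lt_n orbT.
rewrite (w_fixed lt_kn) (@w_fixed n n) ?size_morphN // morphNS nth_morph //.
by rewrite size_morphN.
Qed.

Lemma w0 : w 0%N = false.
Proof. by rewrite (@w_fixed 0 0). Qed.

Lemma fixed_point_prefix j : (j < k)%N -> w j = nth false u0 j.
Proof. by move=> lt_j; have := fixed_point_nth 0 lt_j; rewrite muln0 add0n w0. Qed.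

Lemma height_phi x : hgt (phi x) k = lambda * step b c x.
Proof.
rewrite -(size_phi x) height_size /lambda /c /b.
have := count_false_true u0; have := count_false_true u1.
rewrite (size_phi true) (size_phi false).
by case: x => /=; lia.
Qed.

Lemma height_block n j : (j <= k)%N -> height b c (fun i => w (k * n + i)) j = hgt (phi (w n)) j.
Proof.
move=> le_j; apply: eq_big_nat => i /andP[_ lt_i].
by rewrite fixed_point_nth // (leq_trans lt_i le_j).
Qed.

Lemma height_mulk n : H w (k * n) = lambda * H w n.
Proof.
elim: n => [|n IH]; first by rewrite muln0 !height0 mulr0.
by rewrite mulnS addnC heightD IH height_block // height_phi heightS mulrDr.
Qed.

Lemma height_rec n j : (j <= k)%N -> H w (k * n + j) = lambda * H w n + hgt (phi (w n)) j.
Proof. by move=> le_j; rewrite heightD height_mulk height_block. Qed.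

Lemma height_expk m n : H w (k ^ m * n) = lambda ^+ m * H w n.
Proof.
elim: m => [|m IH]; first by rewrite expn0 mul1n expr0 mul1r.
by rewrite expnS -mulnA height_mulk IH exprS mulrA.
Qed.

Lemma height_expk1 m : H w (k ^ m) = lambda ^+ m * - b%:Z.
Proof. by rewrite -[(k ^ m)%N]muln1 height_expk heightS height0 w0 add0r. Qed.

Lemma height_prefix j : (j <= k)%N -> H w j = hgt u0 j.
Proof. by move=> le_j; have := height_rec 0 le_j; rewrite muln0 add0n height0 mulr0 add0r w0. Qed.

Lemma bc_gt0 : (0 < b + c)%N.
Proof. by rewrite addn_gt0 b_gt0. Qed.

Lemma wap_of_lambda_le1 : lambda <= 1 -> weak_abelian_periodic w.
Proof.
move=> le_lambda1; have b_pos := b_gt0; have k2 := k_ge2.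
have expk_ge N e : (N <= e)%N -> (N <= k ^ e)%N.
  by move=> le_Ne; apply: leq_trans (ltnW (ltn_expl N k2)) _; rewrite leq_pexp2l; lia.
case: (leP (-1) lambda) => [ge_lambdaN1|lt_lambdaN1].
  have lambda2 : lambda ^+ 2 = 0 \/ lambda ^+ 2 = 1.
    have : lambda = -1 \/ lambda = 0 \/ lambda = 1 by lia.
    by rewrite expr2; case=> [->|[->|->]]; [right|left|right].
  have [h Hh] : exists h, infinitely_often (fun n => H w n = h).
    apply: (@level_of_band _ _ w (- b%:Z) b.+1) => N.
    exists (k ^ (2 * N.+1))%N; first by apply: expk_ge; lia.
    rewrite height_expk1 exprM; case: lambda2 => ->; rewrite ?expr1n ?expr0n /=; lia.
  exact: wap_of_level bc_gt0 Hh.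
apply: (@wap_of_crossing _ _ w 0 bc_gt0) => N.
exists (k ^ (2 * N))%N, (k ^ (2 * N).+1)%N.
have le_N : (N <= k ^ (2 * N) <= k ^ (2 * N).+1)%N.
  by apply/andP; split; [apply: expk_ge; lia | rewrite leq_pexp2l; lia].
rewrite !height_expk1 exprSr exprM.
have : 0 < (lambda ^+ 2) ^+ N by rewrite exprn_gt0 // expr2; nia.
by split => //; nia.
Qed.

Lemma wap_of_prefix_height_ge0 : 2 <= lambda ->
  (exists2 j, (1 <= j <= k)%N & 0 <= hgt u0 j) -> weak_abelian_periodic w.
Proof.
move=> ge_lambda2 [j /andP[ge_j le_j] Hj]; have b_pos := b_gt0.
apply: (@wap_of_crossing _ _ w 0 bc_gt0) => N.
exists (k ^ N)%N, (k ^ N * j)%N.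
have le_N : (N <= k ^ N <= k ^ N * j)%N.
  by apply/andP; split; [exact: ltnW (ltn_expl N k_ge2) | exact: leq_pmulr].
rewrite height_expk1 height_expk height_prefix //.
have : 0 < lambda ^+ N by rewrite exprn_gt0 //; lia.
by split => //; nia.
Qed.

Lemma wap_of_peak_condition iA it : 2 <= lambda ->
  (1 <= iA <= k)%N -> nth false u0 iA.-1 -> (1 <= it <= k)%N -> nth false u1 it.-1 ->
  hgt u0 iA <= lambda * (hgt u0 iA - c%:Z) + hgt u1 it -> weak_abelian_periodic w.
Proof.
move=> ge_lambda2 /andP[ge_iA le_iA] u0_iA /andP[ge_it le_it] u1_it Hcond.
have b_pos := b_gt0; have k2 := k_ge2.
set A := hgt u0 iA in Hcond; set t := hgt u1 it in Hcond.
pose peak n := [/\ (2 <= n)%N, w n.-1 & A <= H w n].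
(* The 1 ending a peak n expands under phi into a peak whose height is
   lambda (H w n - c) + t >= lambda (A - c) + t >= A. *)
have peak_next n : peak n -> (n < k * n.-1 + it)%N /\ peak (k * n.-1 + it).
  case=> ge_n2 w_n A_le; split; first nia.
  have E : (k * n.-1 + it).-1 = (k * n.-1 + it.-1)%N by case: (it) ge_it => // i _; rewrite addnS.
  split; first nia.
  - by rewrite E fixed_point_nth ?w_n //; lia.
  - have := heightS b c w n.-1; rewrite prednK ?w_n /=; last lia.
    by rewrite height_rec // w_n -/t => Hn; nia.
have peak_iA : peak iA.
  have : iA != 1%N by apply: contraTneq u0_iA => ->; rewrite u0_head_false.
  split; [lia | rewrite fixed_point_prefix //; lia | by rewrite height_prefix].
have peak_inf N : exists2 n, (N <= n)%N & peak n.
  elim: N => [|N [n le_n Hn]]; first by exists iA.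
  case: (ltnP N n) => [lt_n|le_nN]; first by exists n.
  have [lt_next Hnext] := peak_next n Hn.
  by exists (k * n.-1 + it)%N => //; lia.
apply: (@wap_of_crossing _ _ w A bc_gt0) => N.
pose M := (N + `|A|)%N.
have [n le_n [_ _ A_le]] := peak_inf (k ^ M)%N.
exists (k ^ M)%N, n; split => //.
- by rewrite le_n andbT (leq_trans _ (ltnW (ltn_expl M k2))) // leq_addr.
- rewrite height_expk1; have := exprn_ge_succ M ge_lambda2; rewrite /M; nia.
Qed.

Lemma lambda_le_pred : lambda <= k%:Z - 1.
Proof.
have := count_false_true u0; rewrite (size_phi false); have := b_gt0.
by rewrite /lambda /b; lia.
Qed.

Section NotWeakAbelianPeriodic.
Variables (A t : int).
Hypothesis ge_lambda2 : 2 <= lambda.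
Hypothesis prefix_lt0 : forall j, (1 <= j <= k)%N -> hgt u0 j < 0.
Hypothesis peak0_le : forall j, (1 <= j <= k)%N -> nth false u0 j.-1 -> hgt u0 j <= A.
Hypothesis peak1_le : forall j, (1 <= j <= k)%N -> nth false u1 j.-1 -> hgt u1 j <= t.
Hypothesis A_lt0 : A < 0.
Hypothesis peak_condition_fails : lambda * (A - c%:Z) + t < A.

Lemma k_ge3 : (3 <= k)%N.
Proof. by have := lambda_le_pred; lia. Qed.

Lemma prefix_le0 j : (j <= k)%N -> hgt u0 j <= 0.
Proof. by case: j => [|j] le_j; rewrite ?height0 // ltW ?prefix_lt0. Qed.

(* Each bound feeds the other one level of phi higher, hence the joint induction on
   n = k q + j. *)
Lemma height_le_log n : (1 <= n)%N -> forall m,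
  ((k ^ m <= n)%N -> H w n <= -1 - m%:Z) /\
  (w n.-1 -> (m == 0)%N || (k ^ m < n)%N -> H w n <= A - m%:Z).
Proof.
have k3 := k_ge3; have b_pos := b_gt0.
have peak1_or := @height_le_peak b c u1 t; rewrite (size_phi true) in peak1_or.
have {}peak1_or := peak1_or peak1_le.
have expk_ge m : (k <= k ^ m.+1)%N by rewrite expnS leq_pmulr // expn_gt0; lia.
elim/ltn_ind: n => n IH ge_n m; split.
- move=> le_km; case: (ltnP n k) => [lt_nk|ge_nk].
    have -> : m = 0%N by case: m le_km => // m le_km; have := expk_ge m; lia.
    rewrite height_prefix; last exact: ltnW.
    by have := @prefix_lt0 n; rewrite ge_n (ltnW lt_nk) => /(_ isT); lia.
  set q := (n %/ k)%N; set j := (n %% k)%N.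
  have En : n = (k * q + j)%N by rewrite /q /j mulnC -divn_eq.
  have lt_j : (j < k)%N by rewrite /j ltn_pmod //; lia.
  have ge_q : (1 <= q)%N by rewrite /q divn_gt0 //; lia.
  have lt_qn : (q.+1 < n)%N by rewrite En; nia.
  have le_q : (k ^ m.-1 <= q)%N.
    case: m le_km => [|m] le_km; first by rewrite expn0.
    by rewrite /= -ltnS -(@ltn_pmul2l k) -?expnS; lia.
  rewrite En height_rec; last exact: ltnW.
  case w_q: (w q).
  + have [_ IHq] := IH q.+1 lt_qn (ltn0Sn q) m.-1.
    have := IHq w_q; rewrite ltnS le_q orbT => /(_ isT); rewrite heightS w_q /=.
    by have [|] := peak1_or j (ltnW lt_j); nia.
  + have [IHq _] := IH q (ltn_trans (ltnSn q) lt_qn) ge_q m.-1.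
    by have := IHq le_q; have := prefix_le0 (ltnW lt_j); nia.
- move=> w_n le_km; case: (leqP n k) => [le_nk|gt_nk].
    have -> : m = 0%N by case: m le_km => // m /orP[] // lt_kn; have := expk_ge m; lia.
    rewrite fixed_point_prefix in w_n; last lia.
    by rewrite height_prefix // subr0; apply: peak0_le; rewrite ?ge_n.
  set q := (n.-1 %/ k)%N; set j := (n.-1 %% k)%N.
  have En1 : n.-1 = (k * q + j)%N by rewrite /q /j mulnC -divn_eq.
  have En : n = (k * q + j.+1)%N by rewrite addnS -En1 prednK.
  have lt_j : (j < k)%N by rewrite /j ltn_pmod //; lia.
  have ge_q : (1 <= q)%N by rewrite /q divn_gt0 //; lia.
  have lt_qn : (q.+1 < n)%N by rewrite En; nia.
  have le_q : (k ^ m.-1 <= q)%N.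
    case: m le_km => [|m] /= lt_km; first by rewrite expn0.
    by rewrite -ltnS -(@ltn_pmul2l k) -?expnS; lia.
  rewrite En1 fixed_point_nth // in w_n.
  rewrite En height_rec //; case w_q: (w q) w_n => /= w_n.
  + have [_ IHq] := IH q.+1 lt_qn (ltn0Sn q) m.-1.
    have := IHq w_q; rewrite ltnS le_q orbT => /(_ isT); rewrite heightS w_q /=.
    by have := @peak1_le j.+1 lt_j w_n; nia.
  + have [IHq _] := IH q (ltn_trans (ltnSn q) lt_qn) ge_q m.-1.
    by have := IHq le_q; have := @peak0_le j.+1 lt_j w_n; nia.
Qed.

Lemma height_le0 n : H w n <= 0.
Proof.
case: n => [|n]; first by rewrite height0.
by have [] := height_le_log (ltn0Sn n) 0; rewrite expn0 => /(_ isT); lia.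
Qed.

Lemma height_ge_geometric m n : (n < k ^ m.+1)%N ->
  - H w n + (k * (b + c))%N%:Z <= 2 * (k * (b + c))%N%:Z * (k%:Z - 1) ^+ m.
Proof.
have k3 := k_ge3; have le_lambda := lambda_le_pred.
set C := (k * (b + c))%N%:Z; have C_ge0 : 0 <= C by [].
have hgt_ge u j : (j <= k)%N -> - C <= hgt u j.
  by move=> le_j; have := height_ge b c (nth false u) j; rewrite /C; nia.
elim: m n => [|m IH] n lt_n.
  rewrite expn1 in lt_n; rewrite expr0 mulr1 height_prefix; last exact: ltnW.
  by have := hgt_ge u0 n (ltnW lt_n); lia.
set q := (n %/ k)%N; set j := (n %% k)%N.
have En : n = (k * q + j)%N by rewrite /q /j mulnC -divn_eq.
have lt_j : (j < k)%N by rewrite /j ltn_pmod //; lia.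
have lt_q : (q < k ^ m.+1)%N by rewrite /q ltn_divLR; [rewrite -expnSr | lia].
rewrite En height_rec; last exact: ltnW.
have := IH q lt_q; have := height_le0 q; have := hgt_ge (phi (w q)) j (ltnW lt_j).
rewrite exprS; set X := (k%:Z - 1) ^+ m => hj_ge Hq_le0 IHq.
have : - (lambda * H w q) <= (k%:Z - 1) * - H w q by nia.
have : (k%:Z - 1) * (- H w q + C) <= (k%:Z - 1) * (2 * C * X) by rewrite ler_wpM2l //; lia.
nia.
Qed.

Lemma height_sublinear (L P : nat) :
  exists N, forall n, (N <= n)%N -> L%:Z * - H w n + P%:Z < n%:Z.
Proof.
have k3 := k_ge3; set C := (k * (b + c))%N.
pose M := ((k - 1) * P + 2 * (k - 1) * L * C + 1)%N.
exists (k ^ M)%N => n le_n.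
have n_gt0 : (0 < n)%N by apply: leq_trans le_n; rewrite expn_gt0; lia.
set m := trunc_log k n.
have le_km : (k ^ m <= n)%N by apply: trunc_logP; lia.
have lt_n : (n < k ^ m.+1)%N by apply: trunc_log_ltn; lia.
have le_Mm : (M <= m)%N.
  by have := leq_ltn_trans le_n lt_n; rewrite ltn_exp2l ?ltnS //; lia.
set K := k%:Z - 1; have K_ge2 : 2 <= K by rewrite /K; lia.
have := height_ge_geometric lt_n; rewrite -/K; set X := K ^+ m => Hlow.
have X_ge1 : 1 <= X by rewrite exprn_ege1 //; lia.
(* Bernoulli: (k / K)^m >= 1 + m / K, so k^m eventually dwarfs any multiple of K^m. *)
have Hbern : (K + m%:Z) * X <= K * (k ^ m)%N%:Z.
  have -> : (k ^ m)%N%:Z = k%:Z ^+ m by lia.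
  by have := @bernoulli_expr K m; rewrite /K subrK; apply; lia.
rewrite ltNge; apply/negP => Hge.
have : K * (n%:Z - P%:Z) <= K * (L%:Z * (2 * C%:Z * X)).
  by rewrite ler_wpM2l //; [lia | nia].
have : (K * P%:Z + 2 * K * L%:Z * C%:Z + 1) * X <= m%:Z * X by rewrite ler_wpM2r //; lia.
have : K * P%:Z <= K * P%:Z * X by rewrite -{1}[K * P%:Z]mulr1 ler_wpM2l //; lia.
have : K * (k ^ m)%N%:Z <= K * n%:Z by rewrite ler_wpM2l //; lia.
nia.
Qed.

Lemma not_wap : ~ weak_abelian_periodic w.
Proof.
move=> /(wap_height_linear b c) [p [L [S [p_incr L_gt0 Hlin]]]].
have p_ge i : (p 0 + i <= p i)%N.
  by elim: i => [|i IH]; rewrite ?addn0 // addnS (leq_ltn_trans IH).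
have H0_le0 := height_le0 (p 0%N).
(* Along p the height is affine with slope S / L: a negative slope contradicts
   sublinearity, a positive one [height_le0] and a zero one [height_le_log]. *)
have [S_lt0|[S_gt0|S0]] : S < 0 \/ 0 < S \/ S = 0 by lia.
- have [N HN] := height_sublinear L (p 0%N).
  have := HN (p N) (leq_trans (leq_addl _ _) (p_ge N)).
  have : (p 0 <= p N)%N by apply: leq_trans (p_ge N); exact: leq_addr.
  move=> le_p0; have : S * ((p N)%:Z - (p 0%N)%:Z) <= - ((p N)%:Z - (p 0%N)%:Z) by nia.
  have : L%:Z * H w (p 0%N) <= 0 by nia.
  by have := Hlin N; lia.
- pose i := (L * `|H w (p 0%N)|).+1.
  have := Hlin i; have := p_ge i; have := height_le0 (p i); rewrite /i; nia.
- pose M := `|H w (p 0%N)|.+1.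
  have le_p : (k ^ M <= p (k ^ M))%N by apply: leq_trans (p_ge _); lia.
  have p_gt0 : (0 < p (k ^ M)%N)%N by apply: leq_trans le_p; rewrite expn_gt0; have := k_ge2; lia.
  have [/(_ le_p)] := height_le_log p_gt0 M.
  by have := Hlin (k ^ M)%N; rewrite S0 mul0r; rewrite /M; nia.
Qed.

End NotWeakAbelianPeriodic.

Lemma graphic_u0_k (R : realType) : graphic b c u0 (k%:R : R) = (lambda * - b%:Z)%:~R.
Proof.
have := height_phi false; rewrite /= => <-.
by rewrite graphic_nat // (size_phi false).
Qed.

Lemma wap_of_graphic_root (R : realType) :
  (exists x : R, [/\ 0 < x, x <= k%:R & graphic b c u0 x = 0]) -> weak_abelian_periodic w.
Proof.
move=> Hroot; case: (leP lambda 1) => [|gt_lambda1]; first exact: wap_of_lambda_le1.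
apply: wap_of_prefix_height_ge0; first lia.
by rewrite -(size_phi false) in Hroot *; exact: graphic_root_height_ge0 Hroot.
Qed.

Lemma wap_of_graphic_k_ge (R : realType) :
  - (b%:R : R) <= graphic b c u0 k%:R -> weak_abelian_periodic w.
Proof.
have -> : - (b%:R : R) = (- b%:Z)%:~R by rewrite intrN.
rewrite graphic_u0_k ler_int => Hge.
by apply: wap_of_lambda_le1; have := b_gt0; nia.
Qed.

Lemma wap_iff_peak_condition (R : realType) :
  (forall x : R, 0 < x -> x <= k%:R -> graphic b c u0 x != 0) ->
  graphic b c u0 k%:R < - (b%:R : R) ->
  weak_abelian_periodic w <->
  max_after_one R b c u0 <= graphic b c u0 k%:R *
    ((max_after_one R b c u0 - c%:R) / - (b%:R : R)) + max_after_one R b c u1.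
Proof.
move=> Hneq0 Hlt; have b_pos := b_gt0.
have ge_lambda2 : 2 <= lambda.
  have : lambda * - b%:Z < - b%:Z by rewrite -(ltr_int R) intrN -graphic_u0_k.
  by nia.
rewrite -(size_phi false) in Hneq0.
have := height_lt0_of_graphic_neq0 b_pos u0_head_false Hneq0.
rewrite (size_phi false) => prefix_lt0.
have u0_has1 : true \in u0 by rewrite -has_pred1 has_count.
have u1_has1 : true \in u1.
  rewrite -has_pred1 has_count; move: ge_lambda2; rewrite /lambda /c.
  have := count_false_true u0; have := count_false_true u1.
  by rewrite (size_phi false) (size_phi true); lia.
have [iA /andP[le_iA u0_iA] EA] := max_after_one_attained R b c u0_has1.
have [it /andP[le_it u1_it] Et] := max_after_one_attained R b c u1_has1.
rewrite (size_phi false) in le_iA; rewrite (size_phi true) in le_it.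
have peak_le u j i : (1 <= j <= k)%N -> nth false u j.-1 -> size u = k ->
    max_after_one R b c u = (hgt u i)%:~R -> hgt u j <= hgt u i.
  by move=> Hj uj size_u Emax; rewrite -(ler_int R) -Emax max_after_one_ub ?size_u.
rewrite EA Et graphic_u0_k.
have -> : (lambda * - b%:Z)%:~R * (((hgt u0 iA)%:~R - c%:R) / - (b%:R : R)) + (hgt u1 it)%:~R
    = (lambda * (hgt u0 iA - c%:Z) + hgt u1 it)%:~R :> R.
  by rewrite intrD !intrM intrB !intrN; field; rewrite pnatr_eq0 -lt0n.
rewrite ler_int; split => [Hwap|]; last exact: wap_of_peak_condition.
case: leP => // Hfails; exfalso.
apply: (@not_wap (hgt u0 iA) (hgt u1 it)) Hwap => //.
- by move=> j Hj uj; apply: peak_le uj (size_phi false) EA.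
- by move=> j Hj uj; apply: peak_le uj (size_phi true) Et.
- exact: prefix_lt0 le_iA.
Qed.

End FixedPoint.

Theorem theorem1 (R : realType) (k : nat) (u0 u1 : seq bool) (w : nat -> bool) :
  uniform k u0 u1 ->
  primitive u0 u1 ->
  nth true u0 0 = false ->
  is_fixed_point_from0 u0 u1 w ->
  let b := count_mem true u0 in
  let c := count_mem false u1 in
  let g0 := @graphic R b c u0 in
  [/\ (exists x : R, [/\ 0 < x, x <= k%:R & g0 x = 0]) -> weak_abelian_periodic w,
      g0 k%:R >= - (b%:R : R) -> weak_abelian_periodic w
    & (forall x : R, 0 < x -> x <= k%:R -> g0 x != 0) -> g0 k%:R < - (b%:R : R) ->
      let Delta := g0 k%:R in
      let A := max_after_one R b c u0 in
      let t := max_after_one R b c u1 in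
      (weak_abelian_periodic w <->
         Delta * ((A - c%:R) / (- (b%:R : R))) + t >= A)].
Proof.
move=> Hu Hp H0 Hf b c g0; split.
- exact: wap_of_graphic_root.
- exact: wap_of_graphic_k_ge.
- exact: wap_iff_peak_condition.
Qed.
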